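(* Let $T>0$, let $h:(0,\infty)\to(0,\infty)$ be bounded with $\lim_{u\to0^+}h(u)=\lim_{u\to+\infty}h(u)=0$, and let $A\in C^1([0,T]\times(0,1)^n;\mathbb S(n))$ satisfy $|A_{ij}(s,\mu)|\le(\mu^i+\mu^j)h(\mu^j/\mu^i)$ for all $(i,j)\in\mathbb E$ and $(s,\mu)\in[0,T]\times(0,1)^n$. There exist constants $K>1$ and $c_0>0$, depending only on $n$, $\omega_{\min}$, $\omega_{\max}$ and $h$, such that the following holds. Let $\epsilon>0$, $\mu\in\mathcal P_\epsilon(\mathbb G)$, $0<t_0<t_1\le T$, and let $\rho\in C^1([0,t_1];(0,1)^n)$ be a classical solution of $\dot\rho(s)=\nabla_{\mathbb G}\cdot A(s,\rho(s))+\Delta_{\mathbb G}\rho(s)$, $\rho(0)=\mu$. If $\delta\in(0,\epsilon/K)$ and $t_0$, $t_1$ are, respectively, the first times such that $\min_i\rho_i(t_0)=\delta$ and $\min_i\rho_i(t_1)=\delta/(2K)$, then $t_1-t_0\ge c_0$.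
   Context: $\mathbb G=(\mathbb V,\mathbb E,\omega)$: finite, connected, simple undirected graph, $\mathbb V=\{1,\dots,n\}$, edges ordered pairs with $(i,j)\in\mathbb E\iff(j,i)\in\mathbb E$, symmetric weights $\omega_{ij}>0$ iff $(i,j)\in\mathbb E$; $\omega_{\min},\omega_{\max}$ the min/max edge weights. $\mathbb S(n)$: skew-symmetric $n\times n$ matrices. $(\nabla_{\mathbb G}\cdot m)^i=\sum_{j\ne i}\sqrt{\omega_{ij}}m^{ji}$; $(\Delta_{\mathbb G}u)^i=\sum_j\omega_{ij}(u^j-u^i)$. $\mathcal P_\epsilon(\mathbb G)$: probability vectors in $\mathbb R^n$ with all entries $>\epsilon$. *)

From HB Require Import structures.
From mathcomp Require Import all_boot all_order all_algebra.
From mathcomp Require Import all_classical all_reals all_analysis.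
Set Implicit Arguments. Unset Strict Implicit. Unset Printing Implicit Defensive.
Import Order.TTheory GRing.Theory Num.Theory.
Import numFieldNormedType.Exports.
Local Open Scope classical_set_scope.
Local Open Scope ring_scope.

Section Defs.
Variable R : realType.

(* Vectors of R^n are row vectors 'rV[R]_n, entry i of x is x ord0 i.
   Weighted graph on vertices 'I_n given by its weight matrix w:
   (i,j) is an edge iff w i j > 0. *)
Definition edge n (w : 'M[R]_n) (i j : 'I_n) : Prop := 0 < w i j.

Definition weighted_graph n (w : 'M[R]_n) : Prop :=
  [/\ forall i j, w i j = w j i,
      forall i j, 0 <= w i j,
      forall i, w i i = 0 &
      forall i j, connect (fun a b : 'I_n => 0 < w a b) i j].

Definition min_weight n (w : 'M[R]_n) (wmin : R) : Prop :=
  (forall i j, edge w i j -> wmin <= w i j) /\ exists i j, edge w i j /\ w i j = wmin.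
Definition max_weight n (w : 'M[R]_n) (wmax : R) : Prop :=
  (forall i j, edge w i j -> w i j <= wmax) /\ exists i j, edge w i j /\ w i j = wmax.

Definition gdiv n (w : 'M[R]_n) (m : 'M[R]_n) : 'rV[R]_n :=
  \row_i \sum_(j | j != i) Num.sqrt (w i j) * m j i.

Definition glap n (w : 'M[R]_n) (u : 'rV[R]_n) : 'rV[R]_n :=
  \row_i \sum_j w i j * (u ord0 j - u ord0 i).

Definition cube n (x : 'rV[R]_n) : Prop := forall i, 0 < x ord0 i < 1.

Definition prob_eps n (eps : R) (x : 'rV[R]_n) : Prop :=
  \sum_i x ord0 i = 1 /\ forall i, eps < x ord0 i.

Definition min_is n (x : 'rV[R]_n) (m : R) : Prop :=
  (forall i, m <= x ord0 i) /\ exists i, x ord0 i = m.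

Definition first_min_time n (rho : R -> 'rV[R]_n) (d t : R) : Prop :=
  min_is (rho t) d /\ forall s, 0 <= s < t -> ~ min_is (rho s) d.

Definition domA n (T : R) : set (R * 'rV[R]_n) :=
  [set x | 0 <= x.1 <= T /\ cube x.2].

(* f is C^1 on the set D: f is the restriction of a map which is C^1 on an
   open neighbourhood O of D (all directional derivatives exist on O and are
   continuous there). *)
Definition C1_on (U V : normedModType R) (D : set U) (f : U -> V) : Prop :=
  exists O : set U, [/\ open O, D `<=` O &
    forall (v x : U), O x -> derivable f x v /\ {for x, continuous ('D_v f)}].

(* derivative of f : R -> V at s relative to the interval [a,b]
   (one-sided at the endpoints) equals v *)
Definition has_deriv_on (V : normedModType R) (a b : R) (f : R -> V) (s : R) (v : V)
  : Prop :=
  (fun k : R => k^-1 *: (f (s + k) - f s)) @ within (fun k => a <= s + k <= b) (0 : R)^'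
    --> v.

Definition classical_solution n (w : 'M[R]_n) (A : R * 'rV[R]_n -> 'M[R]_n)
  (t1 : R) (mu : 'rV[R]_n) (rho : R -> 'rV[R]_n) : Prop :=
  [/\ forall s, 0 <= s <= t1 -> cube (rho s),
      rho 0 = mu &
      exists rho' : R -> 'rV[R]_n,
        [/\ forall s, 0 <= s <= t1 -> has_deriv_on 0 t1 rho s (rho' s),
            {within `[0, t1], continuous rho'} &
            forall s, 0 <= s <= t1 -> rho' s = gdiv w (A (s, rho s)) + glap w (rho s)]].

End Defs.

(* At a vertex k where rho(s) is minimal, each edge jk changes rho_k at rate at least
   -C rho_k, with C = [edge_outflow_rate wmax M u0]: when rho_k / rho_j < u0 we have
   h (rho_k / rho_j) <= sqrt wmin, so the flux sqrt(w_kj) A_jk is dominated by the diffusion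
   w_kj (rho_j - rho_k) up to -2 wmax rho_k; otherwise rho_j <= rho_k / u0 and h <= M
   suffices.  Hence after t0 every rho_k stays above the line delta (1 - (L + 1)(s - t0)),
   L = n C: at a first touching time the touching coordinate is minimal, so its slope is at
   least -L delta, larger than the slope -(L + 1) delta of the line.  Reaching delta / (2 K)
   with K = 2 thus takes time at least 3 / (4 (L + 1)). *)

From HB Require Import structures.
From mathcomp Require Import all_boot all_order all_algebra.
From mathcomp Require Import all_classical all_reals all_analysis.
From mathcomp Require Import ring lra.
Set Implicit Arguments. Unset Strict Implicit. Unset Printing Implicit Defensive.
Import Order.TTheory GRing.Theory Num.Theory.
Import numFieldNormedType.Exports.
Local Open Scope classical_set_scope.
Local Open Scope ring_scope.

Section RelativeDerivative.
Variable R : realType.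
Implicit Types (a b s v : R).

Lemma has_deriv_on_sub (V : normedModType R) a b c d (f : R -> V) s (v : V) :
  a <= c -> d <= b -> has_deriv_on a b f s v -> has_deriv_on c d f s v.
Proof.
move=> ac db; apply: cvg_trans; apply: cvg_app; apply: within_subset.
by move=> x /andP[cx xd]; apply/andP; split; [apply: le_trans cx|apply: le_trans db].
Qed.

Lemma has_deriv_onD (V : normedModType R) a b (f g : R -> V) s (u v : V) :
  has_deriv_on a b f s u -> has_deriv_on a b g s v ->
  has_deriv_on a b (f \+ g) s (u + v).
Proof.
move=> df dg; rewrite /has_deriv_on.
have -> : (fun x : R => x^-1 *: ((f \+ g) (s + x) - (f \+ g) s)) =
  (fun x => x^-1 *: (f (s + x) - f s)) \+ (fun x => x^-1 *: (g (s + x) - g s)).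
  by apply/funext => x /=; rewrite -scalerDr opprD addrACA.
exact: cvgD.
Qed.

Lemma has_deriv_on_affine (V : normedModType R) a b (c d : V) s :
  has_deriv_on a b (fun t => t *: c + d) s c.
Proof.
apply: cvg_trans; [apply: near_eq_cvg|exact: cvg_cst].
apply: filterS (nbhs_dnbhs_neq (0 : R)) => x x0 _.
by rewrite opprD addrACA subrr addr0 -scalerBl addrAC subrr add0r scalerA mulVf // scale1r.
Qed.

Lemma has_deriv_on_coord a b m n (f : R -> 'M[R]_(m, n)) s (v : 'M[R]_(m, n)) i j :
  has_deriv_on a b f s v -> has_deriv_on a b (fun t => f t i j) s (v i j).
Proof.
move=> df; rewrite /has_deriv_on.
have -> : (fun x : R => x^-1 *: (f (s + x) i j - f s i j)) =
    (fun M : 'M[R]_(m, n) => M i j) \o (fun x => x^-1 *: (f (s + x) - f s)).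
  by apply/funext => x /=; rewrite !mxE.
exact: continuous_cvg (@coord_continuous R m n i j v) df.
Qed.

Lemma has_deriv_on_cvg (V : normedModType R) a b (f : R -> V) s (v : V) :
  has_deriv_on a b f s v ->
  f (s + x) @[x --> within (fun x => a <= s + x <= b) 0^'] --> f s.
Proof.
set F := within _ _ => df.
have x_to0 : (fun x : R => x) @ F --> (0 : R).
  by apply: cvg_trans (cvg_within _) _; exact: cvg_within.
have : (fun x => f s + x *: (x^-1 *: (f (s + x) - f s))) @ F --> f s + 0 *: v.
  exact: cvgD (cvg_cst _) (cvgZ x_to0 df).
rewrite scale0r addr0; apply: cvg_trans; apply: near_eq_cvg.
apply: filterS (nbhs_dnbhs_neq (0 : R)) => x x0 _.
by rewrite scalerA mulfV // scale1r addrC subrK.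
Qed.

Lemma has_deriv_on_gt0 a b (f : R -> R) s v :
  has_deriv_on a b f s v -> 0 < v ->
  \forall x \near within (fun x => a <= s + x <= b) 0^', 0 < x -> f s < f (s + x).
Proof.
move=> df v0; apply: filterS (cvgr_gt v df 0 v0) => x q0 x0.
by move: q0; rewrite /= pmulr_rgt0 ?invr_gt0 // subr_gt0.
Qed.

Lemma near_within_dnbhs0 (D P : set R) :
  (\forall x \near within D 0^', P x) ->
  exists2 e : R, 0 < e & forall x, 0 < `|x| < e -> D x -> P x.
Proof.
move=> /nbhs_ballP[e e0 He]; exists e => // x /andP[x0 xe].
apply: He; last by rewrite -normr_gt0.
by rewrite -ball_normE /ball_ /= sub0r normrN.
Qed.

Lemma has_deriv_on_ge0_left a b (f : R -> R) s v :
  a < s <= b -> has_deriv_on a b f s v ->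
  (forall x, a <= x < s -> 0 <= f x) -> 0 <= f s.
Proof.
move=> /andP[a_s s_b] df f_ge0; rewrite leNgt; apply/negP => fs_lt0.
have [e e0 near_s] := near_within_dnbhs0 (cvgr_lt _ (has_deriv_on_cvg df) 0 fs_lt0).
pose x := Num.min (e / 2) ((s - a) / 2).
have x_gt0 : 0 < x by rewrite lt_min !divr_gt0 // subr_gt0.
have [x_e x_sa] : x <= e / 2 /\ x <= (s - a) / 2 by rewrite !ge_min !lexx ?orbT.
have := near_s (- x); rewrite normrN gtr0_norm // x_gt0 /=.
have := f_ge0 (s + - x); lra.
Qed.

Lemma has_deriv_on_ge0_right a b (f : R -> R) s v :
  has_deriv_on a b f s v -> 0 <= f s -> (f s = 0 -> 0 < v) ->
  \forall x \near within (fun x => a <= s + x <= b) 0^', 0 < x -> 0 <= f (s + x).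
Proof.
move=> df; rewrite le_eqVlt => /orP[/eqP fs0 | fs_gt0] v_gt0.
  apply: filterS (has_deriv_on_gt0 df (v_gt0 (esym fs0))) => x incr /incr.
  by rewrite -fs0; exact: ltW.
by apply: filterS (cvgr_gt _ (has_deriv_on_cvg df) 0 fs_gt0) => x /ltW.
Qed.

Lemma forward_invariant_ge0 (I : finType) (g g' : I -> R -> R) a b :
  a <= b ->
  (forall i s, a <= s <= b -> has_deriv_on a b (g i) s (g' i s)) ->
  (forall i, 0 <= g i a) ->
  (forall i s, a <= s <= b -> (forall j, 0 <= g j s) -> g i s = 0 -> 0 < g' i s) ->
  forall i, 0 <= g i b.
Proof.
move=> a_b dg g_a dg_gt0.
pose S := [set t | a <= t <= b /\ forall s, a <= s <= t -> forall i, 0 <= g i s].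
have S_a : S a.
  split=> [|s /andP[a_s s_a]]; first by rewrite lexx.
  by have -> : s = a by apply/eqP; rewrite eq_le s_a a_s.
have S_ub : ubound S b by move=> t [/andP[]].
have supS : has_sup S by split; [exists a | exists b].
pose tau := sup S.
have a_tau : a <= tau := sup_upper_bound supS S_a.
have tau_b : tau <= b by apply: ge_sup => //; exists a.
have tau_in : a <= tau <= b by rewrite a_tau tau_b.
have below : forall s, a <= s < tau -> forall i, 0 <= g i s.
  move=> s /andP[a_s s_tau].
  have [t [_ St]] := sup_adherent (eps := tau - s) (ltac:(lra)) supS.
  rewrite -/tau => t_gt; apply: St; rewrite a_s /=; lra.
have g_tau : forall i, 0 <= g i tau.
  move=> i; have [<-|a_ne_tau] := eqVneq a tau; first exact: g_a.
  apply: has_deriv_on_ge0_left (dg i tau tau_in) (fun x x_lt => below x x_lt i).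
  by rewrite lt_neqAle a_ne_tau a_tau tau_b.
suff <- : tau = b by [].
apply/eqP; rewrite eq_le tau_b leNgt; apply/negP => tau_lt_b.
have : \forall x \near within (fun x => a <= tau + x <= b) 0^',
    forall i, 0 < x -> 0 <= g i (tau + x).
  apply: filter_forall => i.
  exact: has_deriv_on_ge0_right (dg i tau tau_in) (g_tau i) (dg_gt0 i tau tau_in g_tau).
case/near_within_dnbhs0 => e e0 near_tau.
pose x := Num.min (e / 2) (b - tau).
have x_gt0 : 0 < x by rewrite lt_min divr_gt0 // subr_gt0.
have [x_e x_b] : x <= e / 2 /\ x <= b - tau by rewrite !ge_min !lexx ?orbT.
suff S_x : S (tau + x) by have := sup_upper_bound supS S_x; rewrite -/tau; lra.
split=> [|s /andP[a_s s_x] i]; first lra.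
have [s_lt|] := ltP s tau; first by apply: below; rewrite a_s.
rewrite le_eqVlt => /orP[/eqP <-|tau_lt_s]; first exact: g_tau.
have := near_tau (s - tau); rewrite gtr0_norm ?subr_gt0 // addrCA subrr addr0.
apply; lra.
Qed.

Lemma entries_ge_linear_barrier n (rho rho' : R -> 'rV[R]_n) (t0 t1 L delta : R) :
  t0 <= t1 -> 0 <= L -> 0 < delta ->
  (forall s, t0 <= s <= t1 -> has_deriv_on t0 t1 rho s (rho' s)) ->
  (forall k, delta <= rho t0 ord0 k) ->
  (forall s k, t0 <= s <= t1 -> (forall j, rho s ord0 k <= rho s ord0 j) ->
     - (L * rho s ord0 k) <= rho' s ord0 k) ->
  forall k, delta - (L + 1) * delta * (t1 - t0) <= rho t1 ord0 k.
Proof.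
move=> t0_t1 L_ge0 delta_gt0 d_rho rho_t0 rho'_ge.
pose beta := (L + 1) * delta.
have beta_ge0 : 0 <= beta by rewrite mulr_ge0 // ?addr_ge0 // ltW.
pose g k t : R := rho t ord0 k - (delta - beta * (t - t0)).
suff g_t1 k : 0 <= g k t1 by move=> k; move: (g_t1 k); rewrite /g /beta; lra.
apply: (@forward_invariant_ge0 _ g (fun k t => rho' t ord0 k + beta)) t0_t1 _ _ _ k.
- move=> {}k s s_in.
  have -> : g k = (fun t => rho t ord0 k) \+ (fun t => t *: beta - (delta + beta * t0)).
    apply/funext => t; rewrite /g /=; set r := rho t ord0 k.
    (* the scaling of [R] as a normed module is its multiplication *)
    by change (r - (delta - beta * (t - t0)) = r + (t * beta - (delta + beta * t0))); ring.
  refine (has_deriv_onD _ (has_deriv_on_affine _ _ _ _)).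
  exact: has_deriv_on_coord (d_rho s s_in).
- by move=> {}k; rewrite /g subrr mulr0 subr0 subr_ge0.
move=> {}k s s_in g_ge0 gk0.
have k_min j : rho s ord0 k <= rho s ord0 j by have := g_ge0 j; move: gk0; rewrite /g; lra.
have rho_le : rho s ord0 k <= delta.
  have : 0 <= beta * (s - t0) by rewrite mulr_ge0 // subr_ge0; case/andP: s_in.
  by move: gk0; rewrite /g; lra.
have := rho'_ge s k s_in k_min; have := ler_wpM2l L_ge0 rho_le; rewrite /beta; lra.
Qed.

Lemma cvg_at_right_lt (f : R -> R) a l c :
  f x @[x --> a^'+] --> l -> l < c ->
  exists2 e : R, 0 < e & forall x, a < x < a + e -> f x < c.
Proof.
move=> fl lc; have : \forall x \near a^'+, f x < c by exact: cvgr_lt fl _ lc.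
move=> /nbhs_ballP[e e0 near_a].
exists e => // x /andP[ax xe]; apply: near_a => //.
by rewrite -ball_normE /ball_ /= ltr0_norm ?subr_lt0 //; lra.
Qed.

End RelativeDerivative.

Definition edge_outflow_rate (R : rcfType) (wmax M u0 : R) : R :=
  2 * wmax + Num.sqrt wmax * M * (u0^-1 + 1).

Lemma edge_outflow_rate_ge0 (R : rcfType) (wmax M u0 : R) :
  0 <= wmax -> 0 <= M -> 0 < u0 -> 0 <= edge_outflow_rate wmax M u0.
Proof.
move=> wmax_ge0 M_ge0 u0_gt0; rewrite /edge_outflow_rate.
by rewrite addr_ge0 ?mulr_ge0 ?sqrtr_ge0 ?addr_ge0 ?invr_ge0 // ltW.
Qed.

Lemma edge_inflow_ge (R : rcfType) (a b w wmax M u0 hv A : R) :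
  0 < a <= b -> 0 < w <= wmax -> 0 < u0 ->
  `|A| <= (b + a) * hv -> hv <= M -> (a / b < u0 -> hv <= Num.sqrt w) ->
  - (edge_outflow_rate wmax M u0 * a) <= Num.sqrt w * A + w * (b - a).
Proof.
move=> /andP[a_gt0 a_b] /andP[w_gt0 w_wmax] u0_gt0 A_le hv_M hv_small.
have hv_ge0 : 0 <= hv.
  by have := le_trans (normr_ge0 A) A_le; rewrite pmulr_rge0 //; lra.
have M_ge0 := le_trans hv_ge0 hv_M.
have sqrt_w_ge0 := sqrtr_ge0 w.
have flux_ge : - (Num.sqrt w * ((b + a) * hv)) <= Num.sqrt w * A.
  by rewrite -mulrN ler_wpM2l // lerNnormlW.
have lap_ge0 : 0 <= w * (b - a) by rewrite mulr_ge0 ?subr_ge0 // ltW.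
have wmax_a : w * a <= wmax * a by rewrite ler_wpM2r //; lra.
have wa_ge0 : 0 <= w * a by rewrite mulr_ge0 // ltW.
have tail_ge0 : 0 <= Num.sqrt wmax * M * (u0^-1 + 1) * a.
  by rewrite !mulr_ge0 ?sqrtr_ge0 ?addr_ge0 ?invr_ge0 // ltW.
rewrite /edge_outflow_rate.
have [small|large] := ltP (a / b) u0.
  have : Num.sqrt w * ((b + a) * hv) <= w * (b + a).
    have sqrt_w2 : Num.sqrt w * Num.sqrt w = w by rewrite -expr2 sqr_sqrtr // ltW.
    rewrite -{2}sqrt_w2 -mulrA ler_wpM2l // [X in _ <= X]mulrC.
    by rewrite ler_wpM2l ?hv_small //; lra.
  lra.
have b_le : b <= a / u0 by rewrite ler_pdivlMr // mulrC -ler_pdivlMr; lra.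
have : Num.sqrt w * ((b + a) * hv) <= Num.sqrt wmax * ((a / u0 + a) * M).
  rewrite ler_pM ?mulr_ge0 ?ler_sqrt //; try lra.
  by rewrite ler_pM //; lra.
have -> : Num.sqrt wmax * ((a / u0 + a) * M) = Num.sqrt wmax * M * (u0^-1 + 1) * a.
  by ring.
lra.
Qed.

Section MinimalVertex.
Variables (R : realType) (n : nat) (w : 'M[R]_n) (wmin wmax : R).
Hypotheses (w_graph : weighted_graph w) (w_min : min_weight w wmin)
  (w_max : max_weight w wmax).

Lemma min_weight_gt0 : 0 < wmin.
Proof. by case: w_min => _ [i [j [eij <-]]]. Qed.

Lemma max_weight_gt0 : 0 < wmax.
Proof. by case: w_max => _ [i [j [eij <-]]]. Qed.

Variables (h : R -> R) (M u0 : R).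
Hypotheses (M_ge0 : 0 <= M) (u0_gt0 : 0 < u0)
  (h_le : forall u, 0 < u -> h u <= M)
  (h_small : forall u, 0 < u < u0 -> h u < Num.sqrt wmin).

Lemma inflow_at_min_vertex_ge (F : 'M[R]_n) (x : 'rV[R]_n) k :
  cube x -> (forall j, x ord0 k <= x ord0 j) ->
  (forall j, edge w j k -> `|F j k| <= (x ord0 j + x ord0 k) * h (x ord0 k / x ord0 j)) ->
  - (n%:R * edge_outflow_rate wmax M u0 * x ord0 k) <= (gdiv w F + glap w x) ord0 k.
Proof.
move=> x_cube k_min F_le; have [w_sym w_ge0 _ _] := w_graph.
have x_gt0 j : 0 < x ord0 j by case/andP: (x_cube j).
have rate_x_ge0 : 0 <= edge_outflow_rate wmax M u0 * x ord0 k.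
  by rewrite mulr_ge0 ?edge_outflow_rate_ge0 // ltW // max_weight_gt0.
have -> : - (n%:R * edge_outflow_rate wmax M u0 * x ord0 k) =
    \sum_(j < n) - (edge_outflow_rate wmax M u0 * x ord0 k).
  by rewrite sumr_const card_ord mulNrn -mulrA mulr_natl.
rewrite /gdiv /glap !mxE [in X in _ <= X]big_mkcond -big_split /=.
apply: ler_sum => j _.
have [->|j_ne_k] := eqVneq j k; first by rewrite subrr mulr0 !addr0 oppr_le0.
have [w0|w_ne0] := eqVneq (w k j) 0.
  by rewrite w0 sqrtr0 !mul0r addr0 oppr_le0.
have w_gt0 : 0 < w k j by rewrite lt_neqAle eq_sym w_ne0 w_ge0.
have e_jk : edge w j k by rewrite /edge -w_sym.
have wkj_le : w k j <= wmax := w_max.1 k j w_gt0.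
rewrite /=; apply: edge_inflow_ge (F_le j e_jk) (h_le _) _.
- by rewrite x_gt0 k_min.
- by rewrite w_gt0 wkj_le.
- exact: u0_gt0.
- by rewrite divr_gt0.
move=> small; apply/ltW/(lt_le_trans (h_small _)); first by rewrite divr_gt0.
by rewrite ler_sqrt // w_min.1.
Qed.
End MinimalVertex.

Theorem lemma2p2 (R : realType) (n : nat) (wmin wmax : R) (h : R -> R)
  (h_pos : forall u : R, 0 < u -> 0 < h u)
  (h_bdd : exists M : R, forall u : R, 0 < u -> h u <= M)
  (h_lim0 : h x @[x --> 0^'+] --> 0)
  (h_liminf : h x @[x --> +oo] --> 0) :
  exists K c0 : R, 1 < K /\ 0 < c0 /\
  forall w : 'M[R]_n, weighted_graph w -> min_weight w wmin -> max_weight w wmax ->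
  forall (T : R) (A : R * 'rV[R]_n -> 'M[R]_n),
    0 < T ->
    C1_on (@domA R n T) A ->
    (forall x, @domA R n T x -> (A x)^T = - A x) ->
    (forall (s : R) (mu : 'rV[R]_n) (i j : 'I_n), 0 <= s <= T -> cube mu -> edge w i j ->
       `|A (s, mu) i j| <= (mu ord0 i + mu ord0 j) * h (mu ord0 j / mu ord0 i)) ->
  forall (eps : R) (mu : 'rV[R]_n) (t0 t1 : R) (rho : R -> 'rV[R]_n) (delta : R),
    0 < eps -> prob_eps eps mu ->
    0 < t0 -> t0 < t1 -> t1 <= T ->
    classical_solution w A t1 mu rho ->
    0 < delta < eps / K ->
    first_min_time rho delta t0 ->
    first_min_time rho (delta / (2 * K)) t1 ->
    c0 <= t1 - t0.
Proof.
have [M h_le] := h_bdd.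
have M_gt0 : 0 < M := lt_le_trans (h_pos 1 ltr01) (h_le 1 ltr01).
have [/andP[wmin_gt0 wmax_gt0]|w_bad] := boolP ((0 < wmin) && (0 < wmax)); last first.
  exists 2, 1; split; [lra|split; [lra|move=> w _ w_min w_max]].
  by rewrite (min_weight_gt0 w_min) (max_weight_gt0 w_max) in w_bad.
have sqrt_wmin_gt0 : 0 < Num.sqrt wmin by rewrite sqrtr_gt0.
have [u0 u0_gt0] := cvg_at_right_lt h_lim0 sqrt_wmin_gt0; rewrite add0r => h_small.
pose L : R := n%:R * edge_outflow_rate wmax M u0.
have L_ge0 : 0 <= L by rewrite mulr_ge0 ?edge_outflow_rate_ge0 // ltW.
exists 2, (3 / (4 * (L + 1))); split; [lra|split; [by rewrite divr_gt0 //; lra|]].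
move=> w w_graph w_min w_max T A _ _ _ A_le eps mu t0 t1 rho delta _ _ t0_gt0 t0_t1 t1_T.
case=> rho_cube _ [rho' [d_rho _ rho'E]] /andP[delta_gt0 _] [[rho_t0 _] _] [[_ [i rho_t1]] _].
have d_rho_t0 s : t0 <= s <= t1 -> has_deriv_on t0 t1 rho s (rho' s).
  by move=> s_in; apply: has_deriv_on_sub (ltW t0_gt0) (lexx t1) (d_rho s _); lra.
have inflow s k : t0 <= s <= t1 -> (forall j, rho s ord0 k <= rho s ord0 j) ->
    - (L * rho s ord0 k) <= rho' s ord0 k.
  move=> s_in k_min; have s_in0 : 0 <= s <= t1 by lra.
  rewrite rho'E //; have := inflow_at_min_vertex_ge w_graph w_min w_max (ltW M_gt0) u0_gt0
    h_le h_small (rho_cube s s_in0) k_min.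
  by apply=> j; apply: A_le (rho_cube s s_in0); lra.
have := entries_ge_linear_barrier (ltW t0_t1) L_ge0 delta_gt0 d_rho_t0 rho_t0 inflow i.
rewrite rho_t1 => t1_bound; rewrite ler_pdivrMr; last lra.
have : 0 <= delta * ((L + 1) * (t1 - t0) - 3 / 4) by lra.
by rewrite pmulr_rge0 // subr_ge0; lra.
Qed.
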